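(* Let $R\in\mathbb{R}^{d\times d}$ be a real symmetric random matrix with zero diagonal whose entries have mean zero and are bounded in absolute value by $1$ (not necessarily i.i.d.). Let $\rho\in(0,1)$ and let $B\in\{0,1\}^{d\times d}$ be a symmetric random matrix with entries $b_{i,j}=b_{j,i}$, where the $b_{i,j}$, $i<j$, are i.i.d. Bernoulli$(\rho)$. Let $A=R\circ B$, where $\circ$ denotes the entrywise (Hadamard) product. Let $\mathcal{E}\in\{-1,1\}^{d\times d}$ be a symmetric random matrix, independent of $A$, with i.i.d. Rademacher entries $\varepsilon_{i,j}$ for $j<i$ and $\varepsilon_{i,j}=\varepsilon_{j,i}$. Then $$\mathbb{E}\|A\circ\mathcal{E}\|_\infty\le K_1 d^{1/2}\rho^{1/4}+K_2 d^{3/4}\rho^{1/2},$$ where $K_1,K_2$ are universal constants.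
   Context: $\|\cdot\|_\infty$ denotes the operator norm (largest singular value) of a matrix. *)

From HB Require Import structures.
From mathcomp Require Import all_boot all_order all_algebra.
From mathcomp Require Import all_classical all_reals all_analysis.
Set Implicit Arguments. Unset Strict Implicit. Unset Printing Implicit Defensive.
Import Order.TTheory GRing.Theory Num.Theory.
Local Open Scope classical_set_scope.
Local Open Scope ring_scope.

Definition vnorm2 (R : realType) (n : nat) (x : 'cV[R]_n) : R :=
  Num.sqrt (\sum_(i < n) x i 0 ^+ 2).

(* Operator norm ||M||_infty = largest singular value = sup_{|x|_2<=1} |Mx|_2 *)
Definition opnorm (R : realType) (n : nat) (M : 'M[R]_n) : R :=
  sup [set vnorm2 (M *m x) | x in [set x : 'cV[R]_n | vnorm2 x <= 1]].

Definition hadamard (R : ringType) (m n : nat) (A B : 'M[R]_(m, n)) : 'M[R]_(m, n) :=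
  \matrix_(i, j) (A i j * B i j).

Definition mutually_independent {d} {T : measurableType d} {R : realType}
  (P : probability T R) (I : finType) (S : {set I}) (X : I -> T -> R) : Prop :=
  forall (J : {set I}), J \subset S ->
  forall (F : I -> set R), (forall k, measurable (F k)) ->
  P (\big[setI/setT]_(k in J) (X k @^-1` F k)) =
  ((\prod_(k in J) fine (P (X k @^-1` F k)))%:E)%E.

(* Independence of two families of real random variables (the sigma-algebras
   they generate are independent): checked on the generating pi-system. *)
Definition independent_families {d} {T : measurableType d} {R : realType}
  (P : probability T R) (I1 I2 : finType) (X : I1 -> T -> R) (Y : I2 -> T -> R)
  : Prop :=
  forall (J1 : {set I1}) (J2 : {set I2}) (F1 : I1 -> set R) (F2 : I2 -> set R),
  (forall k, measurable (F1 k)) -> (forall k, measurable (F2 k)) ->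
  P ((\big[setI/setT]_(k in J1) (X k @^-1` F1 k)) `&`
     (\big[setI/setT]_(k in J2) (Y k @^-1` F2 k))) =
  (P (\big[setI/setT]_(k in J1) (X k @^-1` F1 k)) *
   P (\big[setI/setT]_(k in J2) (Y k @^-1` F2 k)))%E.

From HB Require Import structures.
From mathcomp Require Import all_boot all_order all_algebra.
From mathcomp Require Import all_classical all_reals all_analysis.
From mathcomp Require Import ring lra zify.
Import Order.TTheory GRing.Theory Num.Theory.
Local Open Scope classical_set_scope.
Local Open Scope ring_scope.

(* Write M = A o E. For every s > 0, AM-GM applied termwise to
   |Mx|^2 = sum_(i,k) x_i x_k (M^T M)_ik gives
     ||M|| <= 3/4 s + ||M^T M||_F^2 / (4 s^3),
   with ||M^T M||_F^2 = sum_(i,k,j,l) M_ji M_jk M_li M_lk.  When j, l are both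
   outside {i, k}, j <> l and i <> k, the sign e_ji differs from the three other
   signs of its term; since the signs are independent of A and e_ji is centred and
   independent of the other signs, the term has mean zero.  Every other term
   vanishes on the zero diagonal or has j = l or i = k, and is then bounded by a
   product of two Bernoulli entries of mean rho or rho^2.  Hence
   E ||M^T M||_F^2 <= 2 (d^2 rho + d^3 rho^2) <= t^4 for
   t = 2 (d^(1/2) rho^(1/4) + d^(3/4) rho^(1/2)), and s = t yields E ||M|| <= t.
   Independence being given on cylinder events only, the expectation of a product
   of independent bounded families is factored by quantizing every coordinate on
   a grid of mesh 1/(N+1) and letting N grow. *)

Set Implicit Arguments. Unset Strict Implicit. Unset Printing Implicit Defensive.

Lemma measurable_preimage {d d' : measure_display} {T : measurableType d}
    {U : measurableType d'} (f : T -> U) (A : set U) :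
  measurable_fun setT f -> measurable A -> measurable (f @^-1` A).
Proof. by move=> mf mA; rewrite -[X in measurable X]setTI; exact: mf. Qed.

Section bounded_random_variables.
Context {d : measure_display} {T : measurableType d} {R : realType}.

Definition bounded_rv (f : T -> R) :=
  measurable_fun setT f /\ exists M : R, forall w, `|f w| <= M.

Lemma bounded_rv_cst c : bounded_rv (fun=> c).
Proof. by split; [exact: measurable_cst | exists `|c|]. Qed.

Lemma bounded_rv_indic (A : set T) : measurable A -> bounded_rv (\1_A).
Proof.
move=> mA; split; first exact: measurable_realfun.measurable_indic.
by exists 1 => w; rewrite indicE; case: (w \in A); rewrite ?normr1 ?normr0.
Qed.

Lemma bounded_rvD f g : bounded_rv f -> bounded_rv g ->
  bounded_rv (fun w => f w + g w).
Proof.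
move=> [mf [M hM]] [mg [N hN]]; split; first exact: measurable_realfun.measurable_funD.
by exists (M + N) => w; apply: le_trans (ler_normD _ _) (lerD (hM w) (hN w)).
Qed.

Lemma bounded_rvB f g : bounded_rv f -> bounded_rv g ->
  bounded_rv (fun w => f w - g w).
Proof.
move=> [mf [M hM]] [mg [N hN]]; split; first exact: measurable_realfun.measurable_funB.
by exists (M + N) => w; apply: le_trans (ler_normB _ _) (lerD (hM w) (hN w)).
Qed.

Lemma bounded_rvM f g : bounded_rv f -> bounded_rv g ->
  bounded_rv (fun w => f w * g w).
Proof.
move=> [mf [M hM]] [mg [N hN]]; split; first exact: measurable_realfun.measurable_funM.
by exists (M * N) => w; rewrite normrM ler_pM.
Qed.

Lemma bounded_rv_norm f : bounded_rv f -> bounded_rv (fun w => `|f w|).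
Proof.
move=> [mf [M hM]]; split; last by exists M => w; rewrite normr_id.
exact: measurableT_comp (@measurable_realfun.normr_measurable _ _) mf.
Qed.

Lemma bounded_rv_sum (I : Type) (s : seq I) (F : I -> T -> R) :
  (forall i, bounded_rv (F i)) -> bounded_rv (fun w => \sum_(i <- s) F i w).
Proof.
move=> bF; elim: s => [|a s IH].
  by under eq_fun do rewrite big_nil; exact: bounded_rv_cst.
by under eq_fun do rewrite big_cons; exact: bounded_rvD.
Qed.

Lemma bounded_rv_prod (I : Type) (s : seq I) (F : I -> T -> R) :
  (forall i, bounded_rv (F i)) -> bounded_rv (fun w => \prod_(i <- s) F i w).
Proof.
move=> bF; elim: s => [|a s IH].
  by under eq_fun do rewrite big_nil; exact: bounded_rv_cst.
by under eq_fun do rewrite big_cons; exact: bounded_rvM.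
Qed.

End bounded_random_variables.

Section real_expectation.
Context {d : measure_display} {T : measurableType d} {R : realType}
  (P : probability T R).

Definition Ex (f : T -> R) : R := \int[P]_(w in setT) f w.

Lemma bounded_rv_integrable f : bounded_rv f -> P.-integrable setT (EFin \o f).
Proof.
move=> [mf [M hM]]; apply: measurable_bounded_integrable => //.
  by rewrite (le_lt_trans (probability_le1 P measurableT)) ?ltry.
exists M; split; first exact: num_real.
by move=> M' hM' w _; exact: le_trans (hM w) (ltW hM').
Qed.

Lemma expectationE f : bounded_rv f -> ('E_P[f] = (Ex f)%:E)%E.
Proof.
move=> bf; rewrite unlock /Ex /Rintegral fineK //.
exact: integrable_fin_num (bounded_rv_integrable bf).
Qed.

Lemma ExD f g : bounded_rv f -> bounded_rv g ->
  Ex (fun w => f w + g w) = Ex f + Ex g.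
Proof. by move=> bf bg; rewrite /Ex RintegralD //; exact: bounded_rv_integrable. Qed.

Lemma ExB f g : bounded_rv f -> bounded_rv g ->
  Ex (fun w => f w - g w) = Ex f - Ex g.
Proof. by move=> bf bg; rewrite /Ex RintegralB //; exact: bounded_rv_integrable. Qed.

Lemma ExZ c f : bounded_rv f -> Ex (fun w => c * f w) = c * Ex f.
Proof. by move=> bf; rewrite /Ex RintegralZl //; exact: bounded_rv_integrable. Qed.

Lemma Ex_cst c : Ex (fun=> c) = c.
Proof. by rewrite /Ex Rintegral_cst // (congr1 fine (probability_setT P)) mulr1. Qed.

Lemma Ex_indic (A : set T) : measurable A -> Ex (\1_A) = fine (P A).
Proof.
by move=> mA; have := expectationE (bounded_rv_indic mA); rewrite expectation_indic // => ->.
Qed.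

Lemma le_Ex f g : bounded_rv f -> bounded_rv g -> (forall w, f w <= g w) ->
  Ex f <= Ex g.
Proof. by move=> bf bg fg; rewrite /Ex le_Rintegral //; exact: bounded_rv_integrable. Qed.

Lemma le_normr_Ex f : bounded_rv f -> `|Ex f| <= Ex (fun w => `|f w|).
Proof. by move=> bf; rewrite /Ex le_normr_Rintegral //; exact: bounded_rv_integrable. Qed.

Lemma Ex_sum (I : Type) (s : seq I) (F : I -> T -> R) :
  (forall i, bounded_rv (F i)) ->
  Ex (fun w => \sum_(i <- s) F i w) = \sum_(i <- s) Ex (F i).
Proof.
move=> bF; elim: s => [|a s IH].
  by under eq_fun do rewrite big_nil; rewrite Ex_cst big_nil.
under eq_fun do rewrite big_cons.
by rewrite ExD ?big_cons ?IH //; exact: bounded_rv_sum.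
Qed.

Lemma normr_Ex_le f c : bounded_rv f -> (forall w, `|f w| <= c) -> `|Ex f| <= c.
Proof.
move=> bf fc; apply: le_trans (le_normr_Ex bf) _.
by rewrite -[leRHS]Ex_cst le_Ex //; [exact: bounded_rv_norm | exact: bounded_rv_cst].
Qed.

Lemma Ex_mul_sum_factor h (K : Type) (r : seq K) (c : K -> R) (f : K -> T -> R) :
  bounded_rv h -> (forall k, bounded_rv (f k)) ->
  (forall k, Ex (fun w => h w * f k w) = Ex h * Ex (f k)) ->
  Ex (fun w => h w * \sum_(k <- r) c k * f k w) =
  Ex h * Ex (fun w => \sum_(k <- r) c k * f k w).
Proof.
move=> bh bf hf; have bcf k : bounded_rv (fun w => c k * f k w).
  by apply: bounded_rvM => //; exact: bounded_rv_cst.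
have bhcf k : bounded_rv (fun w => h w * (c k * f k w)) by exact: bounded_rvM.
under eq_fun do rewrite mulr_sumr.
rewrite !Ex_sum // mulr_sumr; apply: eq_bigr => k _; under eq_fun do rewrite mulrCA.
by rewrite !ExZ // ?hf; [rewrite mulrCA | exact: bounded_rvM].
Qed.

End real_expectation.

(* No measurability of [f] is required: that of the operator norm of a random
   matrix is never established. *)
Lemma ge0_le_expectation {d : measure_display} {T : measurableType d} {R : realType}
  (P : probability T R) (f g : T -> R) :
  (forall w, 0 <= f w) -> (forall w, f w <= g w) -> ('E_P[f] <= 'E_P[g])%E.
Proof.
move=> f0 fg; have g0 w : 0 <= g w by exact: le_trans (fg w).
rewrite unlock !ge0_integralE => [|x _|x _]; rewrite ?lee_fin //.
apply: ereal_sup_le => _ [h hf <-]; exists h => // x; apply: le_trans (hf x) _.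
by rewrite /restrict /patch; case: ifP; rewrite ?lee_fin.
Qed.

Lemma mul_le_amgm {R : realFieldType} (c u v : R) : 0 < c ->
  u * v <= (c * u ^+ 2 + v ^+ 2 / c) / 2.
Proof.
move=> c0; rewrite -subr_ge0.
have -> : (c * u ^+ 2 + v ^+ 2 / c) / 2 - u * v = (c * u - v) ^+ 2 / (2 * c).
  by field; rewrite gt_eqF.
by rewrite divr_ge0 ?sqr_ge0 // mulr_ge0 // ltW.
Qed.

Section operator_norm_bound.
Context {R : realType} {n : nat}.
Implicit Types (M : 'M[R]_n) (x : 'cV[R]_n).

Definition frobenius2 M : R := \sum_i \sum_k M i k ^+ 2.

Lemma sqr_vnorm2 x : vnorm2 x ^+ 2 = \sum_i x i 0 ^+ 2.
Proof. by rewrite sqr_sqrtr // sumr_ge0 // => i _; exact: sqr_ge0. Qed.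

Lemma sqr_vnorm2_mulmx M x :
  vnorm2 (M *m x) ^+ 2 = \sum_i \sum_k x i 0 * x k 0 * (M^T *m M) i k.
Proof.
rewrite sqr_vnorm2; under eq_bigr do rewrite mxE expr2 big_distrlr /=.
rewrite exchange_big; apply: eq_bigr => i _; rewrite exchange_big.
apply: eq_bigr => k _; rewrite !mxE mulr_sumr; apply: eq_bigr => j _.
by rewrite !mxE; ring.
Qed.

(* AM-GM with weight [c] on each term [x_i x_k (M^T M)_ik]. *)
Lemma sqr_vnorm2_mulmx_le M x c : 0 < c -> vnorm2 x <= 1 ->
  vnorm2 (M *m x) ^+ 2 <= (c + frobenius2 (M^T *m M) / c) / 2.
Proof.
move=> c0 x1; set G := M^T *m M.
have X1 : (\sum_i x i 0 ^+ 2) ^+ 2 <= 1.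
  by rewrite -sqr_vnorm2 -exprM exprn_ile1 // sqrtr_ge0.
rewrite sqr_vnorm2_mulmx.
apply: (@le_trans _ _ (\sum_i \sum_k (c * (x i 0 * x k 0) ^+ 2 + G i k ^+ 2 / c) / 2)).
  by apply: ler_sum => i _; apply: ler_sum => k _; exact: mul_le_amgm.
have -> : \sum_i \sum_k (c * (x i 0 * x k 0) ^+ 2 + G i k ^+ 2 / c) / 2 =
    (c * (\sum_i x i 0 ^+ 2) ^+ 2 + frobenius2 G / c) / 2.
  rewrite expr2 big_distrlr /= /frobenius2 mulr_sumr mulr_suml -big_split mulr_suml /=.
  apply: eq_bigr => i _; rewrite mulr_sumr mulr_suml -big_split mulr_suml /=.
  by apply: eq_bigr => k _; rewrite exprMn.
by rewrite ler_pM2r // lerD2r -[leRHS]mulr1 ler_pM2l.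
Qed.

Lemma vnorm2_mulmx_le M x s : 0 < s -> vnorm2 x <= 1 ->
  vnorm2 (M *m x) <= 3 / 4 * s + frobenius2 (M^T *m M) / (4 * s ^+ 3).
Proof.
move=> s0 x1; set y := vnorm2 (M *m x); set Q := frobenius2 _.
have hy : y <= (s + y ^+ 2 / s) / 2.
  by have := mul_le_amgm 1 y s0; rewrite mul1r expr1n mulr1.
apply: (le_trans hy).
have -> : 3 / 4 * s + Q / (4 * s ^+ 3) = (s + (s ^+ 2 + Q / s ^+ 2) / 2 / s) / 2.
  by field; rewrite gt_eqF.
by rewrite ler_pM2r // lerD2l ler_pM2r ?invr_gt0 // sqr_vnorm2_mulmx_le ?exprn_gt0.
Qed.

Lemma vnorm20 : vnorm2 (0 : 'cV[R]_n) = 0.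
Proof. by rewrite /vnorm2 big1 ?sqrtr0 // => i _; rewrite mxE expr0n. Qed.

Let unit_ball_image M := [set vnorm2 (M *m x) | x in [set x | vnorm2 x <= 1]].

Let unit_ball_image0 M : unit_ball_image M 0.
Proof. by exists 0; rewrite /= ?mulmx0 vnorm20. Qed.

Lemma opnorm_le M s : 0 < s ->
  opnorm M <= 3 / 4 * s + frobenius2 (M^T *m M) / (4 * s ^+ 3).
Proof.
move=> s0; apply: ge_sup; first by exists 0; exact: unit_ball_image0.
by move=> _ [x x1 <-]; exact: vnorm2_mulmx_le.
Qed.

Lemma opnorm_ge0 M : 0 <= opnorm M.
Proof.
apply: sup_upper_bound; last exact: unit_ball_image0.
split; first by exists 0; exact: unit_ball_image0.
exists (3 / 4 * 1 + frobenius2 (M^T *m M) / (4 * 1 ^+ 3)) => _ [x x1 <-].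
exact: vnorm2_mulmx_le.
Qed.

Lemma opnorm_dim0 M : n = 0%N -> opnorm M = 0.
Proof.
move=> n0; apply/le_anti; rewrite opnorm_ge0 andbT.
apply: ge_sup; first by exists 0; exact: unit_ball_image0.
move=> _ [x _ <-]; rewrite /vnorm2 big1 ?sqrtr0 // => -[i hi].
by exfalso; rewrite n0 in hi.
Qed.

End operator_norm_bound.

Lemma dist_prod_le_sum {R : realDomainType} (I : Type) (s : seq I) (a b : I -> R) :
  (forall i, `|a i| <= 1) -> (forall i, `|b i| <= 1) ->
  `|\prod_(i <- s) a i - \prod_(i <- s) b i| <= \sum_(i <- s) `|a i - b i|.
Proof.
move=> a1 b1; elim: s => [|i s IH]; first by rewrite !big_nil subrr normr0.
rewrite !big_cons.
have -> : a i * \prod_(j <- s) a j - b i * \prod_(j <- s) b j =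
    (a i - b i) * \prod_(j <- s) a j + b i * (\prod_(j <- s) a j - \prod_(j <- s) b j).
  by ring.
apply: le_trans (ler_normD _ _) _; rewrite !normrM; apply: lerD.
  rewrite -[leRHS]mulr1 ler_wpM2l // normr_prod prodr_ile1 // => j _.
  by rewrite normr_ge0 a1.
by rewrite -[leRHS]mul1r ler_pM.
Qed.

Lemma normr_le_div_succ_eq0 {R : archiRealFieldType} (x c : R) :
  (forall N : nat, `|x| <= c / N.+1%:R) -> x = 0.
Proof.
move=> hx; apply/normr0_eq0/le_anti; rewrite normr_ge0 andbT.
apply/ler_addgt0Pr => e e0; rewrite add0r.
have c0 : 0 <= c by have := hx 0%N; rewrite divr1; exact: le_trans.
pose N := Num.Def.archi_bound (c / e).
apply: le_trans (hx N) _; rewrite ler_pdivrMr // mulrC -ler_pdivrMr //.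
by apply/ltW/(lt_trans (archi_boundP (divr_ge0 c0 (ltW e0)))); rewrite ltr_nat.
Qed.

Section quantization.
Context {R : realType} (N : nat).
Let Nr : R := N.+1%:R.
Let Nr_gt0 : 0 < Nr. Proof. by rewrite ltr0n. Qed.

Definition grid_point (k : 'I_(N.+1).*2.+1) : R := k%:R / Nr - 1.

Definition grid_cell k : set R := `[grid_point k, grid_point k + Nr^-1[%classic.

Definition quantize (z : R) : R := \sum_k grid_point k * \1_(grid_cell k) z.

Lemma grid_cell_measurable k : measurable (grid_cell k).
Proof. exact: measurable_itv. Qed.

Lemma indic_grid_cell z k : -1 <= z ->
  \1_(grid_cell k) z = (Num.truncn ((z + 1) * Nr) == k)%:R :> R.
Proof.
move=> z1; have z0 : 0 <= (z + 1) * Nr.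
  by rewrite mulr_ge0 ?(ltW Nr_gt0) // addrC -lerBlDl sub0r.
rewrite indicE (truncn_eq k z0); congr (_%:R).
have -> : (z \in grid_cell k) = (z \in `[grid_point k, grid_point k + Nr^-1[).
  by apply/idP/idP => [/set_mem //|h]; apply/mem_set.
have -> : grid_point k + Nr^-1 = (k%:R + 1) / Nr - 1.
  by rewrite /grid_point; field; rewrite gt_eqF.
by rewrite /grid_point in_itv /= -natr1 lerBlDr ltrBrDr ler_pdivrMr // ltr_pdivlMr.
Qed.

Lemma quantize_approx z : `|z| <= 1 ->
  `|quantize z - z| <= Nr^-1 /\ `|quantize z| <= 1.
Proof.
rewrite ler_norml => /andP[z1 z1'].
set x := (z + 1) * Nr.
have x0 : 0 <= x by rewrite mulr_ge0 ?(ltW Nr_gt0) // addrC -lerBlDl sub0r.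
have /andP[mx xm] := truncn_itv x0; set m := Num.truncn x in mx xm.
have mK : (m < (N.+1).*2.+1)%N.
  rewrite ltnS -(ler_nat R) (le_trans mx) // /x -mul2n natrM -[N.+1%:R]/Nr.
  by rewrite ler_pM2r //; lra.
have -> : quantize z = grid_point (Ordinal mK).
  rewrite /quantize (bigD1 (Ordinal mK)) //= indic_grid_cell // eqxx mulr1.
  rewrite big1 ?addr0 // => k /negbTE kK.
  by rewrite indic_grid_cell // -[m == k]/(Ordinal mK == k) eq_sym kK mulr0.
rewrite /grid_point /=; split.
  have -> : m%:R / Nr - 1 - z = (m%:R - x) / Nr by rewrite /x; field; rewrite gt_eqF.
  rewrite -natr1 in xm; rewrite ler_norml ler_pdivlMr // ler_pdivrMr //.
  by rewrite mulNr mulVf ?gt_eqF //; apply/andP; split; lra.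
have mz : m%:R / Nr <= z + 1 by rewrite ler_pdivrMr.
have m0 : 0 <= m%:R / Nr by rewrite divr_ge0 // ltW.
move: mz m0; set q := m%:R / Nr => mz m0.
by rewrite ler_norml; apply/andP; split; lra.
Qed.

End quantization.

Section cylinders.
Context {d : measure_display} {T : measurableType d} {R : realType}.
Context {I : finType} (S : {set I}) (Z : I -> T -> R).

Definition cylinder (C : set T) : Prop :=
  exists2 G : I -> set R, (forall m, measurable (G m)) &
    C = \big[setI/setT]_(m in S) (Z m @^-1` G m).

Lemma cylinderT : cylinder setT.
Proof. by exists (fun=> setT) => //; rewrite big1 // => m _; rewrite preimage_setT. Qed.

Lemma cylinderI C C' : cylinder C -> cylinder C' -> cylinder (C `&` C').
Proof.
move=> [G mG ->] [G' mG' ->]; exists (fun m => G m `&` G' m) => [m|].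
  exact: measurableI.
by rewrite -big_split; apply: eq_bigr => m _; rewrite preimage_setI.
Qed.

Lemma cylinder_preimage m A : m \in S -> measurable A -> cylinder (Z m @^-1` A).
Proof.
move=> mS mA; exists (fun k => if k == m then A else setT) => [k|].
  by case: ifP.
rewrite (bigD1 m) //= eqxx big1 ?setIT // => k /andP[_ /negbTE ->].
exact: preimage_setT.
Qed.

Lemma cylinder_measurable C : (forall m, measurable_fun setT (Z m)) ->
  cylinder C -> measurable C.
Proof.
move=> mZ [G mG ->]; apply: bigsetI_measurable => m _.
exact: measurable_preimage.
Qed.

End cylinders.

Section factorization.
Context {d : measure_display} {T : measurableType d} {R : realType}
  (P : probability T R).
Context {I : finType} (S : {set I}) (Z : I -> T -> R) (h : T -> R).
Hypotheses (mZ : forall m, measurable_fun setT (Z m))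
  (Z1 : forall m w, `|Z m w| <= 1) (bh : bounded_rv h)
  (h_cylinder : forall C, cylinder S Z C ->
     Ex P (fun w => h w * \1_C w) = Ex P h * fine (P C)).

Let bounded_rv_Z m : bounded_rv (Z m). Proof. by split => //; exists 1. Qed.

Let bounded_rv_quantize N m : bounded_rv (fun w => quantize N (Z m w)).
Proof.
apply: bounded_rv_sum => k; apply: bounded_rvM; first exact: bounded_rv_cst.
rewrite -[X in bounded_rv X]/(\1_(Z m @^-1` grid_cell k)).
apply/bounded_rv_indic/measurable_preimage => //; exact: grid_cell_measurable.
Qed.

Let bounded_rv_cylinder_quantize N s C : cylinder S Z C ->
  bounded_rv (fun w => \1_C w * \prod_(m <- s) quantize N (Z m w)).
Proof.
move=> cC; apply: bounded_rvM; first exact/bounded_rv_indic/(cylinder_measurable mZ cC).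
exact: bounded_rv_prod.
Qed.

(* Expanding the quantizer of the first factor refines [C] into the cylinders
   [C `&` Z a @^-1` grid_cell k], whence the induction over all cylinders [C]. *)
Lemma Ex_mul_cylinder_quantize N s C : {subset s <= S} -> cylinder S Z C ->
  Ex P (fun w => h w * (\1_C w * \prod_(m <- s) quantize N (Z m w))) =
  Ex P h * Ex P (fun w => \1_C w * \prod_(m <- s) quantize N (Z m w)).
Proof.
elim: s C => [|a s IH] C sS cC.
  under eq_fun do rewrite big_nil mulr1; under [in RHS]eq_fun do rewrite big_nil mulr1.
  by rewrite h_cylinder // Ex_indic //; exact: cylinder_measurable cC.
have sS' : {subset s <= S} by move=> m ms; apply: sS; rewrite inE ms orbT.
have cCk (k : 'I_(N.+1).*2.+1) : cylinder S Z (C `&` Z a @^-1` grid_cell k).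
  apply/(cylinderI cC)/cylinder_preimage; last exact: grid_cell_measurable.
  by apply: sS; rewrite mem_head.
have expand w : \1_C w * \prod_(m <- a :: s) quantize N (Z m w) =
    \sum_(k < (N.+1).*2.+1) grid_point k *
      (\1_(C `&` Z a @^-1` grid_cell k) w * \prod_(m <- s) quantize N (Z m w)).
  rewrite big_cons {1}/quantize mulr_suml mulr_sumr; apply: eq_bigr => k _.
  rewrite indicI /= (_ : \1_(Z a @^-1` _) w = \1_(grid_cell k) (Z a w)) //.
  ring.
under eq_fun do rewrite expand; under [in RHS]eq_fun do rewrite expand.
apply: Ex_mul_sum_factor => // k.
  exact: bounded_rv_cylinder_quantize.
exact: IH.
Qed.

Lemma prod_quantize_approx N s w :
  `|\prod_(m <- s) Z m w - \prod_(m <- s) quantize N (Z m w)| <= (size s)%:R / N.+1%:R.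
Proof.
have err m : `|Z m w - quantize N (Z m w)| <= N.+1%:R^-1.
  by rewrite distrC; exact: (quantize_approx N (Z1 m w)).1.
apply: le_trans (@dist_prod_le_sum _ _ s (Z^~ w) (fun m => quantize N (Z m w)) _ _) _.
- by move=> m; exact: Z1.
- by move=> m; exact: (quantize_approx N (Z1 m w)).2.
apply: le_trans (ler_sum _ (fun m _ => err m)) _.
by rewrite big_const_seq count_predT iter_addr_0 -[_ *+ size s]mulr_natl.
Qed.

Lemma Ex_mul_prod s : {subset s <= S} ->
  Ex P (fun w => h w * \prod_(m <- s) Z m w) =
  Ex P h * Ex P (fun w => \prod_(m <- s) Z m w).
Proof.
move=> sS; have [_ [Mh hM]] := bh.
set g := fun w => \prod_(m <- s) Z m w.
have bg : bounded_rv g by exact: bounded_rv_prod.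
apply/eqP; rewrite -subr_eq0; apply/eqP.
apply: (@normr_le_div_succ_eq0 _ _ (Mh * (size s)%:R + Mh * (size s)%:R)) => N.
set D := fun w => \prod_(m <- s) quantize N (Z m w).
have bD : bounded_rv D by exact: bounded_rv_prod.
have hD : Ex P (fun w => h w * D w) = Ex P h * Ex P D.
  have := Ex_mul_cylinder_quantize N sS (cylinderT S Z).
  rewrite indicT /=; under eq_fun do rewrite mul1r.
  by under [X in _ * Ex P X]eq_fun do rewrite mul1r.
pose e : R := (size s)%:R / N.+1%:R.
have gD (w : T) : `|g w - D w| <= e by exact: prod_quantize_approx.
have -> : Ex P (fun w => h w * g w) - Ex P h * Ex P g =
    Ex P (fun w => h w * (g w - D w)) + Ex P h * Ex P (fun w => D w - g w).
  under [X in _ = Ex P X + _]eq_fun do rewrite mulrBr.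
  by rewrite !ExB ?hD //; [ring | exact: bounded_rvM | exact: bounded_rvM].
rewrite mulrDl -!mulrA -/e; apply: le_trans (ler_normD _ _) (lerD _ _).
- apply: normr_Ex_le => [|w]; first exact: bounded_rvM bh (bounded_rvB bg bD).
  by rewrite normrM ler_pM.
- rewrite normrM ler_pM //; first exact: normr_Ex_le bh hM.
  apply: normr_Ex_le => [|w]; first exact: bounded_rvB bD bg.
  by rewrite distrC.
Qed.

End factorization.

Section independence.
Context {d : measure_display} {T : measurableType d} {R : realType}
  (P : probability T R).

Definition independent_cylinders (I1 I2 : finType) (S1 : {set I1}) (S2 : {set I2})
    (U : I1 -> T -> R) (V : I2 -> T -> R) : Prop :=
  forall C1 C2, cylinder S1 U C1 -> cylinder S2 V C2 -> P (C1 `&` C2) = (P C1 * P C2)%E.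

Lemma independent_families_cylinders (I1 I2 : finType)
    (U : I1 -> T -> R) (V : I2 -> T -> R) :
  independent_families P U V -> independent_cylinders [set: I1]%SET [set: I2]%SET U V.
Proof. by move=> iUV _ _ [G1 mG1 ->] [G2 mG2 ->]; exact: iUV. Qed.

Lemma mutually_independent_cylinders (I : finType) (S S1 S2 : {set I})
    (X : I -> T -> R) :
  mutually_independent P S X -> (S1 :|: S2)%SET \subset S -> [disjoint S1 & S2]%B ->
  independent_cylinders S1 S2 X X.
Proof.
move=> iX sS dS _ _ [G1 mG1 ->] [G2 mG2 ->].
pose G k := if k \in S1 then G1 k else G2 k.
have mG k : measurable (G k) by rewrite /G; case: ifP.
have -> : \big[setI/setT]_(k in S1) (X k @^-1` G1 k) =
    \big[setI/setT]_(k in S1) (X k @^-1` G k).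
  by apply: eq_bigr => k kS1; rewrite /G kS1.
have -> : \big[setI/setT]_(k in S2) (X k @^-1` G2 k) =
    \big[setI/setT]_(k in S2) (X k @^-1` G k).
  by apply: eq_bigr => k kS2; rewrite /G (disjointFl dS kS2).
move: sS; rewrite finset.subUset => /andP[sS1 sS2].
have iXG (J : {set I}) := fun JS : J \subset S => iX J JS G mG.
transitivity (P (\big[setI/setT]_(k in (S1 :|: S2)%SET) (X k @^-1` G k))).
  by rewrite big_setU //; exact: setIid.
rewrite !iXG ?finset.subUset ?sS1 // -EFinM (eq_bigl [predU S1 & S2]) ?bigU //.
by move=> k; rewrite !inE.
Qed.

Lemma independent_cylinders_Ex_prod (I1 I2 : finType) (S1 : {set I1}) (S2 : {set I2})
    (U : I1 -> T -> R) (V : I2 -> T -> R) (s1 : seq I1) (s2 : seq I2) :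
  independent_cylinders S1 S2 U V ->
  (forall m, measurable_fun setT (U m)) -> (forall m w, `|U m w| <= 1) ->
  (forall m, measurable_fun setT (V m)) -> (forall m w, `|V m w| <= 1) ->
  {subset s1 <= S1} -> {subset s2 <= S2} ->
  Ex P (fun w => \prod_(m <- s1) U m w * \prod_(m <- s2) V m w) =
  Ex P (fun w => \prod_(m <- s1) U m w) * Ex P (fun w => \prod_(m <- s2) V m w).
Proof.
move=> iUV mU U1 mV V1 sS1 sS2.
have bU : bounded_rv (fun w => \prod_(m <- s1) U m w).
  by apply: bounded_rv_prod => m; split => //; exists 1.
have indic_prodU C2 : cylinder S2 V C2 ->
    Ex P (fun w => \1_C2 w * \prod_(m <- s1) U m w) =
    Ex P \1_C2 * Ex P (fun w => \prod_(m <- s1) U m w).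
  move=> cC2; have mC2 := cylinder_measurable mV cC2.
  apply: (Ex_mul_prod (S := S1)) => // [|C1 cC1]; first exact: bounded_rv_indic.
  have mC1 := cylinder_measurable mU cC1.
  rewrite (_ : (fun w => _) = \1_(C2 `&` C1)); last by rewrite indicI.
  rewrite !Ex_indic //; last exact: measurableI.
  by rewrite setIC iUV // fineM 1?mulrC // fin_num_measure.
apply: (Ex_mul_prod (S := S2)) => // C2 cC2.
rewrite mulrC -Ex_indic; last exact: cylinder_measurable mV cC2.
by rewrite -indic_prodU //; under eq_fun do rewrite mulrC.
Qed.

Lemma mutually_independent_Ex_mul_prod (I : finType) (S : {set I})
    (X : I -> T -> R) (a : I) (s : seq I) :
  mutually_independent P S X ->
  (forall m, measurable_fun setT (X m)) -> (forall m w, `|X m w| <= 1) ->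
  a \in S -> {subset s <= S :\ a} ->
  Ex P (fun w => X a w * \prod_(m <- s) X m w) =
  Ex P (X a) * Ex P (fun w => \prod_(m <- s) X m w).
Proof.
move=> iX mX X1 aS sS.
have iXa : independent_cylinders [set a] (S :\ a) X X.
  apply: mutually_independent_cylinders iX _ _; first by rewrite finset.setD1K.
  by rewrite finset.disjoints1 finset.setD11.
have sa : {subset [:: a] <= [set a]%SET} by move=> m; rewrite mem_seq1 inE.
have := independent_cylinders_Ex_prod iXa mX X1 mX X1 sa sS.
under eq_fun do rewrite big_seq1.
by under [F in _ = Ex P F * _ -> _]eq_fun do rewrite big_seq1.
Qed.

End independence.

Section unordered_pairs.
Context {n : nat}.
Implicit Types u v : 'I_n.

Definition incr_pair u v : 'I_n * 'I_n := if (u < v)%N then (u, v) else (v, u).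
Definition decr_pair u v : 'I_n * 'I_n := if (v < u)%N then (u, v) else (v, u).

Lemma incr_pairE (A : Type) (f : 'I_n -> 'I_n -> A) u v :
  (forall x y, f x y = f y x) -> f (incr_pair u v).1 (incr_pair u v).2 = f u v.
Proof. by move=> fC; rewrite /incr_pair; case: ifP. Qed.

Lemma decr_pairE (A : Type) (f : 'I_n -> 'I_n -> A) u v :
  (forall x y, f x y = f y x) -> f (decr_pair u v).1 (decr_pair u v).2 = f u v.
Proof. by move=> fC; rewrite /decr_pair; case: ifP. Qed.

Lemma incr_pair_lt u v : u != v -> ((incr_pair u v).1 < (incr_pair u v).2)%N.
Proof. by rewrite /incr_pair -val_eqE; case: ifP => /= *; lia. Qed.

Lemma decr_pair_lt u v : u != v -> ((decr_pair u v).2 < (decr_pair u v).1)%N.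
Proof. by rewrite /decr_pair -val_eqE; case: ifP => /= *; lia. Qed.

Lemma incr_pair_eq u v u' v' :
  (incr_pair u v == incr_pair u' v') = (u == u') && (v == v') || (u == v') && (v == u').
Proof.
rewrite /incr_pair -!val_eqE.
by do 2 case: ifP => /=; rewrite xpair_eqE -!val_eqE /=; lia.
Qed.

End unordered_pairs.

Section gram_bound_sums.
Context {R : realFieldType} (d : nat) (rho : R).

Definition pair_moment (x y : 'I_d) : R := if x == y then rho else rho ^+ 2.

Definition gram_term_bound (i k j l : 'I_d) : R :=
  (if j == l then pair_moment i k else 0) + (if i == k then pair_moment j l else 0).

Lemma sum_delta (x : 'I_d) (f : 'I_d -> R) :
  \sum_(l < d) (if x == l then f l else 0) = f x.
Proof. by rewrite -big_mkcond (big_pred1 x) // => l; rewrite eq_sym. Qed.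

Lemma sum_pair_moment_le :
  \sum_x \sum_y pair_moment x y <= d%:R * rho + d%:R ^+ 2 * rho ^+ 2.
Proof.
apply: (@le_trans _ _ (\sum_x \sum_y ((if x == y then rho else 0) + rho ^+ 2))).
  apply: ler_sum => x _; apply: ler_sum => y _; rewrite /pair_moment.
  by case: ifP => _; rewrite ?add0r // lerDl sqr_ge0.
under eq_bigr do rewrite big_split /= sum_delta sumr_const card_ord.
by rewrite sumr_const card_ord le_eqVlt; apply/orP; left; apply/eqP; ring.
Qed.

Lemma sum_gram_term_bound_le :
  \sum_i \sum_k \sum_j \sum_l gram_term_bound i k j l <=
  2 * (d%:R ^+ 2 * rho + d%:R ^+ 3 * rho ^+ 2).
Proof.
set SV := \sum_x \sum_y pair_moment x y.
have -> : \sum_i \sum_k \sum_j \sum_l gram_term_bound i k j l = SV *+ d + SV *+ d.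
  transitivity (\sum_i \sum_k (pair_moment i k *+ d + (if i == k then SV else 0))).
    apply: eq_bigr => i _; apply: eq_bigr => k _.
    under eq_bigr => j _ do rewrite big_split /= (sum_delta j (fun=> pair_moment i k)).
    rewrite big_split /= sumr_const card_ord; congr (_ + _).
    by case: eqP => // _; rewrite big1 // => j _; rewrite big1.
  under eq_bigr => i _ do rewrite big_split /= (sum_delta i (fun=> SV)).
  rewrite big_split /= sumr_const card_ord; congr (_ + _).
  by rewrite /SV -sumrMnl; apply: eq_bigr => i _; rewrite -sumrMnl.
apply: (@le_trans _ _ ((d%:R * rho + d%:R ^+ 2 * rho ^+ 2) *+ d *+ 2)).
  by rewrite mulr2n lerD // ler_wMn2r // sum_pair_moment_le.
by rewrite le_eqVlt; apply/orP; left; apply/eqP; ring.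
Qed.

End gram_bound_sums.

Lemma exprn_powR {R : realType} (a r : R) (n m : nat) : 0 <= a ->
  r * n%:R = m%:R -> (a `^ r) ^+ n = a ^+ m.
Proof. by move=> a0 h; rewrite -powR_mulrn ?powR_ge0 // -powRrM h powR_mulrn. Qed.

Lemma pow4_addr_ge {R : realFieldType} (u v : R) : 0 <= u -> 0 <= v ->
  u ^+ 4 + v ^+ 4 <= (u + v) ^+ 4.
Proof.
move=> u0 v0; rewrite -subr_ge0.
have -> : (u + v) ^+ 4 - (u ^+ 4 + v ^+ 4) =
    u * v * (4 * u ^+ 2 + 6 * u * v + 4 * v ^+ 2) by ring.
by rewrite !mulr_ge0 ?addr_ge0 ?mulr_ge0 ?sqr_ge0.
Qed.

Lemma sum_moments_le_quartic {R : realType} (a b : R) : 0 <= a -> 0 <= b ->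
  2 * (a ^+ 2 * b + a ^+ 3 * b ^+ 2) <=
  (2 * (a `^ (1 / 2) * b `^ (1 / 4) + a `^ (3 / 4) * b `^ (1 / 2))) ^+ 4.
Proof.
move=> a0 b0; set u := a `^ _ * _; set v := a `^ _ * _.
have u4 : u ^+ 4 = a ^+ 2 * b.
  by rewrite exprMn (@exprn_powR _ a _ _ 2) ?(@exprn_powR _ b _ _ 1) ?expr1 //; field.
have v4 : v ^+ 4 = a ^+ 3 * b ^+ 2.
  by rewrite exprMn (@exprn_powR _ a _ _ 3) ?(@exprn_powR _ b _ _ 2) //; field.
have u0 : 0 <= u by rewrite mulr_ge0 ?powR_ge0.
have v0 : 0 <= v by rewrite mulr_ge0 ?powR_ge0.
rewrite -u4 -v4 [leRHS]exprMn.
apply: le_trans (ler_wpM2l (ler0n _ 2) (pow4_addr_ge u0 v0)) _.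
by rewrite ler_wpM2r ?exprn_ge0 ?addr_ge0 // -natrX ler_nat.
Qed.

Lemma quarter_amgm_le {R : realFieldType} (t c : R) : 0 < t -> c <= t ^+ 4 ->
  3 / 4 * t + c / (4 * t ^+ 3) <= t.
Proof.
move=> t0 ct; rewrite -subr_ge0.
have -> : t - (3 / 4 * t + c / (4 * t ^+ 3)) = (t ^+ 4 - c) / (4 * t ^+ 3).
  by field; rewrite gt_eqF.
by rewrite divr_ge0 ?subr_ge0 // mulr_ge0 // exprn_ge0 // ltW.
Qed.

Section sparse_symmetric_model.
Context {R : realType} (d : nat) (rho : R) {dT : measure_display}
  {T : measurableType dT} (P : probability T R) (Rm Bm Em : T -> 'M[R]_d).
Hypotheses (rho_gt0 : 0 < rho)
  (mR : forall i j, measurable_fun setT (fun w => Rm w i j))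
  (dR : forall w i, Rm w i i = 0)
  (bR : forall w i j, `|Rm w i j| <= 1)
  (mB : forall i j, measurable_fun setT (fun w => Bm w i j))
  (sB : forall w i j, Bm w i j = Bm w j i)
  (vB : forall w i j, Bm w i j = 0 \/ Bm w i j = 1)
  (pB : forall i j : 'I_d, (i < j)%N -> P ((fun w => Bm w i j) @^-1` [set 1]) = rho%:E)
  (iB : mutually_independent P [set p : 'I_d * 'I_d | (p.1 < p.2)%N]
    (fun p w => Bm w p.1 p.2))
  (mE : forall i j, measurable_fun setT (fun w => Em w i j))
  (sE : forall w i j, Em w i j = Em w j i)
  (vE : forall w i j, Em w i j = 1 \/ Em w i j = -1)
  (pE : forall i j : 'I_d, (j < i)%N ->
     P ((fun w => Em w i j) @^-1` [set 1]) = (1 / 2)%:E)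
  (iE : mutually_independent P [set p : 'I_d * 'I_d | (p.2 < p.1)%N]
    (fun p w => Em w p.1 p.2))
  (iAE : independent_families P
    (fun p w => hadamard (Rm w) (Bm w) p.1 p.2) (fun p w => Em w p.1 p.2)).

Let M w := hadamard (hadamard (Rm w) (Bm w)) (Em w).
Let X (p : 'I_d * 'I_d) w := hadamard (Rm w) (Bm w) p.1 p.2.
Let Y (p : 'I_d * 'I_d) w := Em w p.1 p.2.

Let M_entry w u v : M w u v = X (u, v) w * Y (u, v) w.
Proof. by rewrite /M /X /Y !mxE. Qed.

Let X_entry p w : X p w = Rm w p.1 p.2 * Bm w p.1 p.2.
Proof. by rewrite /X mxE. Qed.

Let B01 w u v : Bm w u v ^+ 2 = Bm w u v.
Proof. by case: (vB w u v) => ->; rewrite ?expr0n ?expr1n. Qed.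

Let B_norm1 w u v : `|Bm w u v| <= 1.
Proof. by case: (vB w u v) => ->; rewrite ?normr0 ?normr1. Qed.

Let Y_norm1 q w : `|Y q w| <= 1.
Proof. by rewrite /Y; case: (vE w q.1 q.2) => ->; rewrite ?normrN normr1. Qed.

Let X_norm1 p w : `|X p w| <= 1.
Proof. by rewrite X_entry normrM -[leRHS]mulr1 ler_pM. Qed.

Let X_measurable p : measurable_fun setT (X p).
Proof.
rewrite (_ : X p = fun w => Rm w p.1 p.2 * Bm w p.1 p.2).
  exact: measurable_realfun.measurable_funM.
by apply/funext => w; rewrite X_entry.
Qed.

Let M_diag w u : M w u u = 0.
Proof. by rewrite M_entry X_entry dR !mul0r. Qed.

Let normr_M_le w u v : `|M w u v| <= Bm w u v.
Proof.
have B0 : 0 <= Bm w u v by case: (vB w u v) => ->.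
rewrite M_entry X_entry !normrM (ger0_norm B0) -[leRHS]mul1r -mulrA.
apply: ler_pM; rewrite ?mulr_ge0 //.
by rewrite -[leRHS]mulr1 ler_pM.
Qed.

Let bounded_rv_M u v : bounded_rv (fun w => M w u v).
Proof.
split; last by exists 1 => w; rewrite M_entry normrM -[leRHS]mulr1 ler_pM.
under eq_fun do rewrite M_entry.
by apply: measurable_realfun.measurable_funM; [exact: X_measurable | exact: mE].
Qed.

Let B_indic u v : (fun w => Bm w u v) = \1_((fun w => Bm w u v) @^-1` [set 1]).
Proof.
apply/funext => w; rewrite indicE; case: (vB w u v) => Bw; rewrite Bw.
  by rewrite memNset //= Bw => /eqP; rewrite eq_sym oner_eq0.
by rewrite mem_set //= Bw.
Qed.

Lemma Ex_B u v : u != v -> Ex P (fun w => Bm w u v) = rho.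
Proof.
move=> uv; rewrite B_indic Ex_indic.
  2: exact: measurable_preimage (mB u v) (measurable_set1 _).
have -> : (fun w => Bm w u v) = (fun w => Bm w (incr_pair u v).1 (incr_pair u v).2).
  by apply/funext => w; rewrite incr_pairE.
by rewrite pB ?incr_pair_lt.
Qed.

Lemma Ex_B_mul c x y : x != c -> y != c ->
  Ex P (fun w => Bm w c x * Bm w c y) = pair_moment rho x y.
Proof.
move=> xc yc; rewrite /pair_moment; case: eqVneq => [<-|xy].
  by under eq_fun do rewrite -expr2 B01; rewrite Ex_B // eq_sym.
pose Bp (p : 'I_d * 'I_d) w := Bm w p.1 p.2.
have BpE u v : (fun w => Bm w (incr_pair u v).1 (incr_pair u v).2) = fun w => Bm w u v.
  by apply/funext => w; rewrite incr_pairE.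
have -> : (fun w => Bm w c x * Bm w c y) =
    (fun w => Bp (incr_pair c x) w * \prod_(q <- [:: incr_pair c y]) Bp q w).
  by apply/funext => w; rewrite big_seq1 /Bp !incr_pairE.
rewrite (mutually_independent_Ex_mul_prod iB) //.
- under [F in _ * Ex P F]eq_fun do rewrite big_seq1.
  by rewrite !BpE !Ex_B // eq_sym.
- by rewrite inE incr_pair_lt // eq_sym.
move=> q; rewrite mem_seq1 => /eqP ->.
by rewrite !inE incr_pair_lt 1?eq_sym // incr_pair_eq eqxx (negbTE xy) eq_sym (negbTE yc).
Qed.

Lemma Ex_E_eq0 (q : 'I_d * 'I_d) : (q.2 < q.1)%N -> Ex P (Y q) = 0.
Proof.
move=> q21; set A := (fun w => Em w q.1 q.2) @^-1` [set 1].
have mA : measurable A by exact: measurable_preimage (mE _ _) (measurable_set1 _).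
have -> : Y q = fun w => 2 * \1_A w - 1.
  apply/funext => w; rewrite indicE /Y /=; case: (vE w q.1 q.2) => Yw.
    have Aw : A w by rewrite /A /= Yw.
    by rewrite Yw (mem_set Aw) /=; lra.
  have nAw : ~ A w by rewrite /A /= Yw => ?; lra.
  by rewrite Yw (memNset nAw) /=; lra.
have bA := bounded_rv_indic mA.
rewrite ExB ?ExZ ?Ex_cst ?Ex_indic //; last 2 first.
- by apply: bounded_rvM => //; exact: bounded_rv_cst.
- exact: bounded_rv_cst.
by rewrite /A pE //=; lra.
Qed.

Let gram_term i k j l w := M w j i * M w j k * (M w l i * M w l k).

Lemma frobenius2_gramE w :
  frobenius2 ((M w)^T *m M w) = \sum_i \sum_k \sum_j \sum_l gram_term i k j l w.
Proof.
apply: eq_bigr => i _; apply: eq_bigr => k _; rewrite mxE expr2 big_distrlr /=.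
by apply: eq_bigr => j _; apply: eq_bigr => l _; rewrite /gram_term !mxE.
Qed.

Lemma Ex_gram_term_eq0 i k j l : j != i -> j != k -> l != i -> l != k ->
  j != l -> i != k -> Ex P (gram_term i k j l) = 0.
Proof.
move=> ji jk li lk jl ik; set ps := [:: (j, i); (j, k); (l, i); (l, k)].
have -> : gram_term i k j l = fun w => \prod_(p <- ps) X p w * \prod_(p <- ps) Y p w.
  by apply/funext => w; rewrite /gram_term /ps !M_entry !big_cons !big_nil; ring.
have iXY := independent_families_cylinders iAE.
rewrite (independent_cylinders_Ex_prod (U := X) (V := Y) iXY) //; last 3 first.
- by move=> m; exact: mE.
- by move=> p; rewrite finset.in_setT.
- by move=> p; rewrite finset.in_setT.
have -> : (fun w => \prod_(p <- ps) Y p w) = fun w => Y (decr_pair j i) w *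
    \prod_(q <- [:: decr_pair j k; decr_pair l i; decr_pair l k]) Y q w.
  by apply/funext => w; rewrite /ps !big_cons big_nil /Y !decr_pairE.
rewrite (mutually_independent_Ex_mul_prod (X := Y) iE) ?Ex_E_eq0 ?mul0r ?mulr0 //;
  rewrite ?decr_pair_lt //.
- by move=> m; exact: mE.
- by rewrite inE decr_pair_lt.
move: ji jk li lk jl ik; rewrite -!val_eqE /= => ji jk li lk jl ik q.
by rewrite !inE => /or3P[] /eqP ->; rewrite /decr_pair;
  do 2 case: ifP => /=; rewrite xpair_eqE -!val_eqE /=; lia.
Qed.

Let bounded_rv_gram_term i k j l : bounded_rv (gram_term i k j l).
Proof. by apply: bounded_rvM; apply: bounded_rvM. Qed.

Let pair_moment_ge0 (x y : 'I_d) : 0 <= pair_moment rho x y.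
Proof. by rewrite /pair_moment; case: ifP; rewrite ?sqr_ge0 ?ltW. Qed.

Let gram_term_bound_ge0 (i k j l : 'I_d) : 0 <= gram_term_bound rho i k j l.
Proof. by rewrite /gram_term_bound addr_ge0 //; case: ifP. Qed.

Let gram_term_le_B i k j l w :
  gram_term i k j l w <= Bm w j i * Bm w j k * (Bm w l i * Bm w l k).
Proof.
apply: le_trans (ler_norm _) _; rewrite /gram_term !normrM.
by rewrite !ler_pM ?mulr_ge0.
Qed.

Let bounded_rv_B u v : bounded_rv (fun w => Bm w u v).
Proof. by split => //; exists 1. Qed.

Lemma Ex_gram_term_le i k j l : Ex P (gram_term i k j l) <= gram_term_bound rho i k j l.
Proof.
have [|] := boolP [|| j == i, j == k, l == i | l == k].
  case/or4P=> /eqP e; rewrite (_ : gram_term _ _ _ _ = fun=> 0) ?Ex_cst //;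
    by apply/funext => w; rewrite /gram_term e M_diag; ring.
rewrite !negb_or => /and4P[ji jk li lk].
have Ex_le_B : Ex P (gram_term i k j l) <=
    Ex P (fun w => Bm w j i * Bm w j k * (Bm w l i * Bm w l k)).
  apply: le_Ex => [||w]; last exact: gram_term_le_B; first exact: bounded_rv_gram_term.
  by apply: bounded_rvM; apply: bounded_rvM; exact: bounded_rv_B.
rewrite /gram_term_bound; case: (eqVneq j l) => [jl|jl].
  subst l; apply: le_trans Ex_le_B _.
  rewrite (_ : (fun w => _) = fun w => Bm w j i * Bm w j k); last first.
    by apply/funext => w; rewrite -expr2 exprMn !B01.
  by rewrite Ex_B_mul 1?eq_sym // lerDl; case: ifP.
case: (eqVneq i k) => [ik|ik].
  subst k; apply: le_trans Ex_le_B _.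
  rewrite (_ : (fun w => _) = fun w => Bm w i j * Bm w i l); last first.
    by apply/funext => w; rewrite -!expr2 !B01 (sB w j) (sB w l).
  by rewrite Ex_B_mul // add0r.
by rewrite Ex_gram_term_eq0 // addr0.
Qed.

Let bounded_rv_frobenius2_gram : bounded_rv (fun w => frobenius2 ((M w)^T *m M w)).
Proof.
under eq_fun do rewrite frobenius2_gramE.
by do 3 (apply: bounded_rv_sum => ?); apply: bounded_rv_sum.
Qed.

Lemma Ex_frobenius2_gram_le : Ex P (fun w => frobenius2 ((M w)^T *m M w)) <=
  2 * (d%:R ^+ 2 * rho + d%:R ^+ 3 * rho ^+ 2).
Proof.
under eq_fun do rewrite frobenius2_gramE.
apply: le_trans (sum_gram_term_bound_le d rho).
rewrite Ex_sum; last by move=> i; do 2 (apply: bounded_rv_sum => ?); exact: bounded_rv_sum.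
apply: ler_sum => i _; rewrite Ex_sum; last first.
  by move=> k; apply: bounded_rv_sum => ?; exact: bounded_rv_sum.
apply: ler_sum => k _; rewrite Ex_sum; last by move=> j; exact: bounded_rv_sum.
apply: ler_sum => j _; rewrite Ex_sum //.
by apply: ler_sum => l _; exact: Ex_gram_term_le.
Qed.

Lemma expectation_opnorm_le : ('E_P[fun w => opnorm (M w)] <=
  (2 * d%:R `^ (1 / 2) * rho `^ (1 / 4) + 2 * d%:R `^ (3 / 4) * rho `^ (1 / 2))%:E)%E.
Proof.
have [d0|d_gt0] := posnP d.
  under eq_fun do rewrite opnorm_dim0 //.
  by rewrite expectation_cst lee_fin addr_ge0 // !mulr_ge0 // powR_ge0.
pose t := 2 * (d%:R `^ (1 / 2) * rho `^ (1 / 4) + d%:R `^ (3 / 4) * rho `^ (1 / 2)).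
have -> : 2 * d%:R `^ (1 / 2) * rho `^ (1 / 4) + 2 * d%:R `^ (3 / 4) * rho `^ (1 / 2) = t.
  by rewrite /t; ring.
have t_gt0 : 0 < t.
  by rewrite /t mulr_gt0 // addr_gt0 // mulr_gt0 // powR_gt0 // ltr0n.
set Q := fun w => frobenius2 ((M w)^T *m M w).
have opnorm_M_le w : opnorm (M w) <= 3 / 4 * t + (4 * t ^+ 3)^-1 * Q w.
  by rewrite [_^-1 * _]mulrC; exact: opnorm_le.
apply: le_trans (ge0_le_expectation P (fun w => opnorm_ge0 _) opnorm_M_le) _.
have bQ : bounded_rv Q := bounded_rv_frobenius2_gram.
have bcQ : bounded_rv (fun w => (4 * t ^+ 3)^-1 * Q w).
  by apply: bounded_rvM => //; exact: bounded_rv_cst.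
rewrite expectationE ?lee_fin; last exact: bounded_rvD (bounded_rv_cst _) bcQ.
rewrite ExD ?Ex_cst ?ExZ //; last exact: bounded_rv_cst.
rewrite [_^-1 * _]mulrC quarter_amgm_le //.
apply: le_trans Ex_frobenius2_gram_le _.
by apply: sum_moments_le_quartic; rewrite ?ler0n ?ltW.
Qed.

End sparse_symmetric_model.

Unset Implicit Arguments.

Theorem lemma2 (R : realType) :
  exists K1 K2 : R,
  forall (d : nat) (rho : R) (dT : measure_display) (T : measurableType dT)
    (P : probability T R) (Rm Bm Em : T -> 'M[R]_d),
  0 < rho < 1 ->
  (* R: symmetric, zero diagonal, mean-zero entries bounded by 1 *)
  (forall i j, measurable_fun setT (fun w => Rm w i j)) ->
  (forall w i j, Rm w i j = Rm w j i) ->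
  (forall w i, Rm w i i = 0) ->
  (forall w i j, `|Rm w i j| <= 1) ->
  (forall i j, ('E_P[fun w => Rm w i j] = 0)%E) ->
  (* B: symmetric 0/1 matrix, b_ij (i<j) iid Bernoulli(rho) *)
  (forall i j, measurable_fun setT (fun w => Bm w i j)) ->
  (forall w i j, Bm w i j = Bm w j i) ->
  (forall w i j, Bm w i j = 0 \/ Bm w i j = 1) ->
  (forall i j : 'I_d, (i < j)%N -> P ((fun w => Bm w i j) @^-1` [set 1]) = rho%:E) ->
  mutually_independent P [set p : 'I_d * 'I_d | (p.1 < p.2)%N]
    (fun p w => Bm w p.1 p.2) ->
  (* E: symmetric sign matrix, eps_ij (j<i) iid Rademacher, independent of A *)
  (forall i j, measurable_fun setT (fun w => Em w i j)) ->
  (forall w i j, Em w i j = Em w j i) ->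
  (forall w i j, Em w i j = 1 \/ Em w i j = -1) ->
  (forall i j : 'I_d, (j < i)%N ->
     P ((fun w => Em w i j) @^-1` [set 1]) = (1 / 2)%:E) ->
  mutually_independent P [set p : 'I_d * 'I_d | (p.2 < p.1)%N]
    (fun p w => Em w p.1 p.2) ->
  independent_families P
    (fun p w => hadamard (Rm w) (Bm w) p.1 p.2) (fun p w => Em w p.1 p.2) ->
  ('E_P[fun w => opnorm (hadamard (hadamard (Rm w) (Bm w)) (Em w))] <=
    (K1 * (d%:R) `^ (1 / 2) * rho `^ (1 / 4)
     + K2 * (d%:R) `^ (3 / 4) * rho `^ (1 / 2))%:E)%E.
Proof.
exists 2, 2 => d rho dT T P Rm Bm Em /andP[rho_gt0 _] mR _ dR bR _ mB sB vB pB iB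
  mE sE vE pE iE iAE.
exact: expectation_opnorm_le.
Qed.
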